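(* For every non-empty finite binary word $w$, the vanishing order satisfies $n_\epsilon(w) \le 2\lfloor \log_2 |w| \rfloor + 2$, where $|w|$ is the length of $w$.
   Context: Binary words are finite or infinite sequences over $\{0,1\}$; $\epsilon$ denotes the empty word. Define the map $\rho$ on binary words as follows: for $b=b_1b_2\dots$, $\rho(b)$ is obtained from $b$ by deleting every digit $b_n=0$ and replacing every digit $b_n=1$ by $0$ if $n$ is odd and by $1$ if $n$ is even (positions are counted in the original word $b$). For a finite binary word $w$, its vanishing order is $n_\epsilon(w)=\min\{k>0 : \rho^k(w)=\epsilon\}$, where $\rho^k$ is the $k$-th iterate of $\rho$. *)

From mathcomp Require Import all_boot.
Set Implicit Arguments. Unset Strict Implicit. Unset Printing Implicit Defensive.

(* Binary words are [seq bool] (false = 0, true = 1). *)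

(* rho_from n b : process b whose first letter sits at (1-based) position n
   of the original word. A digit 0 is deleted; a digit 1 at odd position
   becomes 0, at even position becomes 1. *)
Fixpoint rho_from (n : nat) (b : seq bool) : seq bool :=
  match b with
  | [::] => [::]
  | x :: b' => if x then (~~ odd n) :: rho_from n.+1 b'
               else rho_from n.+1 b'
  end.

Definition rho (b : seq bool) : seq bool := rho_from 1 b.

Definition is_vanishing_order (w : seq bool) (k : nat) : Prop :=
  0 < k /\ iter k rho w = [::] /\
  (forall j, 0 < j < k -> iter j rho w <> [::]).

From mathcomp Require Import all_boot.
From mathcomp Require Import zify.

(* A letter of rho(y) is produced exactly by a digit 1 of y, so
   |rho(y)| is the number of 1s in y; and a digit 1 of rho(x) comes from a
   digit 1 of x at an even position, so rho(x) has at most |x|/2 ones.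
   Together, |rho(rho(x))| <= |x|/2: two applications of rho at least halve
   the length.  Iterating, |rho^(2t)(w)| * 2^t <= |w|, so rho^(2t)(w) is empty
   as soon as |w| < 2^t, which holds for t = floor(log2 |w|) + 1.  Finally,
   any k > 0 with rho^k(w) empty bounds the vanishing order, which exists as
   the least such k; this gives n_eps(w) <= 2 floor(log2 |w|) + 2.  (The
   argument does not use that w is non-empty.) *)

Lemma size_rho_from (n : nat) (y : seq bool) :
  size (rho_from n y) = count id y.
Proof.
by elim: y n => [|b y IH] n //=; case: b => /=; rewrite IH.
Qed.

(* Only the 1s at even positions become 1s, so at most half of the letters
   (rounded up when the word starts at an even position) are 1s. *)
Lemma count_rho_from (n : nat) (x : seq bool) :
  (count id (rho_from n x)).*2 <= size x + ~~ odd n.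
Proof.
elim: x n => [|b x IH] n /=; first by case: (odd n).
have := IH n.+1; rewrite /= negbK.
by case: b => /=; case: (odd n) => /=; lia.
Qed.

Lemma size_rho2 (x : seq bool) : (size (rho (rho x))).*2 <= size x.
Proof. by rewrite /rho size_rho_from -[size x]addn0 count_rho_from. Qed.

Lemma size_iter_rho2 (w : seq bool) (t : nat) :
  size (iter t.*2 rho w) * 2 ^ t <= size w.
Proof.
elim: t => [|t IH]; first by rewrite muln1.
rewrite doubleS !iterS expnS mulnA [_ * 2]muln2.
by apply: leq_trans IH; rewrite leq_mul2r size_rho2 orbT.
Qed.

Lemma iter_rho2_nil (w : seq bool) (t : nat) :
  size w < 2 ^ t -> iter t.*2 rho w = [::].
Proof.
move=> short; have := leq_ltn_trans (size_iter_rho2 w t) short.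
by rewrite -[X in _ < X]mul1n ltn_pmul2r ?expn_gt0 // ltnS leqn0 => /nilP.
Qed.

Lemma vanishing_order_le (w : seq bool) (k : nat) :
  0 < k -> iter k rho w = [::] -> exists2 m, is_vanishing_order w m & m <= k.
Proof.
move=> k_gt0 erased.
have ex_k : exists j, (0 < j) && (iter j rho w == [::]).
  by exists k; rewrite k_gt0 erased eqxx.
case: (ex_minnP ex_k) => m /andP [m_gt0 /eqP erased_m] m_min.
exists m; last by apply: m_min; rewrite k_gt0 erased eqxx.
split=> //; split=> // j /andP [j_gt0 j_lt_m] erased_j.
by have := m_min j; rewrite j_gt0 erased_j eqxx leqNgt j_lt_m => /(_ isT).
Qed.

Theorem proposition2p1 (w : seq bool) :
  0 < size w ->
  exists k, is_vanishing_order w k /\ k <= (trunc_log 2 (size w)).*2 + 2.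
Proof.
move=> _.
set t := (trunc_log 2 (size w)).+1.
have erased : iter t.*2 rho w = [::].
  exact/iter_rho2_nil/trunc_log_ltn.
have t2_gt0 : 0 < t.*2 by rewrite double_gt0.
have [k vanish k_le] := @vanishing_order_le w t.*2 t2_gt0 erased.
by exists k; split; last by rewrite addn2 -doubleS.
Qed.
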